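(* Let $\Gamma=(I,E)$ be a finite quiver, $\alpha\ge1$, and $x\in\mathrm{Rep}_\alpha(\Gamma)$. Then the stabilizer of $x$ in $G_\alpha$ has cardinality $$|\mathrm{Aut}(x)|=(q-1)^{c(\Gamma_{\alpha,x})}\,q^{\sum_{k=1}^{\alpha-1}c(\Gamma_{k,x})}.$$
   Context: $F$ local field with ring of integers $\mathcal O$, maximal ideal $\mathfrak m=(\pi)$, residue field of size $q$; $\mathcal O_\alpha=\mathcal O/\mathfrak m^\alpha$, and the absolute value of an element of $\mathcal O_\alpha$ is that of any lift to $\mathcal O$ (so $|0|=0$ in $\mathcal O_\alpha$ is consistent: $|y|\le q^{-\alpha}$ iff $y=0$). $\mathrm{Rep}_\alpha(\Gamma)=\mathcal O_\alpha^E$ (representations with dimension vector $(1,\dots,1)$); $G_\alpha=(\mathcal O_\alpha^\times)^I$ acts by $(g\cdot x)_e=g_{t(e)}x_eg_{s(e)}^{-1}$; $\mathrm{Aut}(x)$ is the stabilizer. For $1\le k\le\alpha$, $\Gamma_{k,x}$ is the graph with vertex set $I$ and edge set $\{e\in E:|x_e|>q^{-k}\}$; $c(\cdot)$ denotes the number of connected components. *)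

From HB Require Import structures.
From mathcomp Require Import all_boot all_order all_algebra.
Set Implicit Arguments. Unset Strict Implicit. Unset Printing Implicit Defensive.
Import Order.TTheory GRing.Theory Num.Theory.
Local Open Scope ring_scope.

(* The truncated ring O_alpha = O / m^alpha.                           *)
(* We model it abstractly as a finite commutative ring R with an      *)
(* element pi (the image of a uniformizer) such that                  *)
(*  - every non-unit is a multiple of pi (so R is local with maximal  *)
(*    ideal (pi)),                                                    *)
(*  - the residue field R/(pi) has exactly q elements.                *)

Definition is_Oalpha (R : finComUnitRingType) (pi : R) (alpha q : nat) : Prop :=
  [/\ pi ^+ alpha = 0,
      pi ^+ alpha.-1 != 0,
      (forall y : R, y \notin GRing.unit -> exists z : R, y = pi * z)
    & (#|[set y : R | [exists z : R, y == (pi * z)%R]]| * q = #|R|)%N].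

Definition val_alpha (R : finComUnitRingType) (pi : R) (alpha : nat) (y : R) : nat :=
  (\max_(k < alpha.+1 | [exists z : R, y == (pi ^+ k * z)%R]) (k : nat))%N.

Definition absv (R : finComUnitRingType) (pi : R) (alpha q : nat) (y : R) : rat :=
  if y == 0 then 0 else ((q%:R : rat) ^- (val_alpha pi alpha y)).

(* Representations of dimension vector (1,...,1): x : {ffun E -> R}.  *)

Definition gamma_adj (I E : finType) (src tgt : E -> I)
    (R : finComUnitRingType) (pi : R) (alpha q : nat) (x : {ffun E -> R})
    (k : nat) : rel I :=
  fun i j => [exists e : E,
      ((q%:R : rat) ^- k < absv pi alpha q (x e)) &&
      (((src e == i) && (tgt e == j)) || ((src e == j) && (tgt e == i)))].

Definition n_comp_gamma (I E : finType) (src tgt : E -> I)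
    (R : finComUnitRingType) (pi : R) (alpha q : nat) (x : {ffun E -> R})
    (k : nat) : nat :=
  n_comp (gamma_adj src tgt pi alpha q x k) (predT : {pred I}).

Definition Aut_x (I E : finType) (src tgt : E -> I)
    (R : finComUnitRingType) (x : {ffun E -> R}) : {set {ffun I -> {unit R}}} :=
  [set g : {ffun I -> {unit R}} |
     [forall e : E, val (g (tgt e)) * x e * (val (g (src e)))^-1 == x e]].

From HB Require Import structures.
From mathcomp Require Import all_boot all_order all_algebra.
Import Order.TTheory GRing.Theory Num.Theory.
Set Implicit Arguments. Unset Strict Implicit. Unset Printing Implicit Defensive.
Local Open Scope ring_scope.

(* The stabiliser condition [g_t x_e g_s^-1 = x_e] says that [g_t = g_s] modulo the
   annihilator [pi^(alpha - v(x_e))] of [x_e].  Count the solutions level by level.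
   Modulo [pi] a solution is a tuple of residue units constant on the components of
   [Gamma_alpha] (the edges with [x_e <> 0]): [(q-1)^c(Gamma_alpha)] choices.  A
   solution modulo [pi^j] has [q] lifts per vertex to [pi^(j+1)], and the new
   constraints say exactly that the lift is constant on the components of
   [Gamma_(alpha-j)] (the edges with [v(x_e) < alpha - j]): [q^c(Gamma_(alpha-j))]
   choices.  At level [alpha] the solutions are [Aut x] itself. *)

Lemma card_uniform_fibers (T U : finType) (A : {pred T}) (B : {pred U})
    (f : T -> U) (m : nat) :
  (forall a, a \in A -> f a \in B) ->
  (forall b, b \in B -> #|[set a in A | f a == b]| = m) -> #|A| = (#|B| * m)%N.
Proof.
move=> fAB fib.
rewrite -sum1_card (partition_big f (mem B)) //= -sum_nat_const.
apply: eq_bigr => b hb; rewrite -(fib b hb) -sum1_card.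
by apply: eq_bigl => a; rewrite inE.
Qed.

Lemma card_translate (V : finZmodType) (A : {pred V}) (c : V) :
  #|[set z | z - c \in A]| = #|A|.
Proof.
rewrite -(card_imset A (addIr c)); apply: eq_card => z; rewrite inE.
apply/idP/imsetP => [h|[w hw ->]]; last by rewrite addrK.
by exists (z - c); rewrite ?subrK.
Qed.

Section ConstantOnComponents.
Variables (I : finType) (e : rel I).
Hypothesis e_sym : connect_sym e.

Lemma edge_invariant_root (T : Type) (f : I -> T) :
  (forall i j, e i j -> f i = f j) -> forall i, f (fingraph.root e i) = f i.
Proof.
move=> fe i; have [p ep ->] := connectP (connect_root e i).
by elim: p i ep => //= j p IH i /andP[/fe -> /IH].
Qed.

Lemma card_edge_invariant (T : finType) (C : I -> {set T}) (m : nat) :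
    (forall i j, e i j -> C i = C j) -> (forall i, #|C i| = m) ->
  #|[set g : {ffun I -> T} | [forall i, g i \in C i] &&
       [forall i, forall j, e i j ==> (g i == g j)]]| = (m ^ n_comp e predT)%N.
Proof.
move=> Ce Cm; pose S : finType := {i : I | roots e i}.
have rootS i : roots e (fingraph.root e i) by exact: roots_root.
pose ext (f : {ffun S -> T}) := [ffun i => f (exist (roots e) _ (rootS i))].
have ext_inj : injective ext.
  move=> f1 f2 /ffunP ef; apply/ffunP => s; have := ef (val s); rewrite !ffunE.
  suff -> : exist (roots e) _ (rootS (val s)) = s by [].
  by apply: val_inj; apply/eqP; exact: (valP s).
have -> : [set g : {ffun I -> T} | [forall i, g i \in C i] &&
       [forall i, forall j, e i j ==> (g i == g j)]] =
     ext @: family (fun s : S => C (val s)).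
  apply/setP => g; rewrite inE; apply/andP/imsetP.
  - case=> /forallP gC /'forall_forallP ge.
    exists [ffun s : S => g (val s)]; first by apply/familyP => s; rewrite ffunE.
    apply/ffunP => i; rewrite !ffunE /=; apply/esym/edge_invariant_root => i' j' eij.
    by apply/eqP; move/(_ i' j'): ge; rewrite eij.
  - case=> f /familyP fC ->; split.
      apply/forallP => i; rewrite ffunE -[C i](edge_invariant_root Ce).
      exact: fC.
    apply/'forall_forallP => i j; apply/implyP => eij; rewrite !ffunE.
    apply/eqP; congr (f _); apply: val_inj => /=.
    by apply/eqP; rewrite root_connect // connect1.
rewrite card_in_imset; last by move=> f1 f2 _ _; exact: ext_inj.
rewrite card_family.
have -> : foldr muln 1 [seq #|C (val s)| | s : S] = (m ^ #|S|)%N.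
  by rewrite cardE /image_mem; elim: (enum _) => //= s l ->; rewrite Cm expnS.
by rewrite card_sig; congr (_ ^ _)%N; apply: eq_card => i; rewrite !inE andbT.
Qed.
End ConstantOnComponents.

Section TruncatedDVR.
Variables (R : finComUnitRingType) (pi : R) (alpha q : nat).
Hypothesis hR : is_Oalpha pi alpha q.

Definition pideal k : {pred R} := [pred y | [exists z, y == pi ^+ k * z]].

Lemma pidealP k y : reflect (exists z, y = pi ^+ k * z) (y \in pideal k).
Proof. by apply: (iffP existsP) => [[z /eqP ->]|[z ->]]; exists z. Qed.

Fact pideal_zmod_closed k : zmod_closed (pideal k).
Proof.
split=> [|_ _ /pidealP[a ->] /pidealP[b ->]]; apply/pidealP.
  by exists 0; rewrite mulr0.
by exists (a - b); rewrite mulrBr.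
Qed.

HB.instance Definition _ k :=
  GRing.isZmodClosed.Build R (pideal k) (pideal_zmod_closed k).

Lemma pideal0 y : y \in pideal 0.
Proof. by apply/pidealP; exists y; rewrite mul1r. Qed.

Lemma pidealS m k : (m <= k)%N -> {subset pideal k <= pideal m}.
Proof.
move=> mk y /pidealP[z ->]; apply/pidealP; exists (pi ^+ (k - m) * z).
by rewrite mulrA -exprD subnKC.
Qed.

Lemma pi_alpha : pi ^+ alpha = 0. Proof. by case: hR. Qed.

Lemma pideal_alpha y : (y \in pideal alpha) = (y == 0).
Proof.
by apply/idP/eqP => [/pidealP[z ->]|->]; rewrite ?pi_alpha ?mul0r ?rpred0.
Qed.

Lemma expr_pi_neq0 k : (k < alpha)%N -> pi ^+ k != 0.
Proof.
case: hR => _ pi_alpha1 _ _ lt_k_alpha; apply: contraNneq pi_alpha1 => pik0.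
have le_k : (k <= alpha.-1)%N by rewrite -ltnS prednK // (leq_ltn_trans _ lt_k_alpha).
by rewrite -(subnKC le_k) exprD pik0 mul0r.
Qed.

Lemma pideal1_nonunit y : (y \in pideal 1) = (y \notin GRing.unit).
Proof.
case: hR => _ _ nonunit_pi _.
have pi_nonunit : pi \notin GRing.unit.
  by apply: contraTN isT => /(unitrX alpha); rewrite pi_alpha unitr0.
apply/idP/idP => [/pidealP[z ->]|/nonunit_pi[z ->]]; last first.
  by apply/pidealP; exists z.
by rewrite unitrM (negbTE pi_nonunit).
Qed.

Lemma unitrDpideal1 u d :
  u \is a GRing.unit -> d \in pideal 1 -> u + d \is a GRing.unit.
Proof.
move=> u_unit d1; apply: contraTT u_unit; rewrite -!pideal1_nonunit => ud1.
by rewrite -(addrK d u) rpredB.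
Qed.

Local Notation v := (val_alpha pi alpha).

Lemma val_alpha_spec y : [/\ (v y <= alpha)%N, y \in pideal (v y) &
   forall k, (k <= alpha)%N -> y \in pideal k -> (k <= v y)%N].
Proof.
pose P (k : 'I_alpha.+1) := [exists z, y == pi ^+ k * z].
have P0 : P ord0 by apply/existsP; exists y; rewrite mul1r.
split=> [||k le_k_alpha yk].
- by apply/bigmax_leqP => i _; rewrite -ltnS.
- by rewrite /val_alpha (bigop.bigmax_eq_arg ord0 P0); case: arg_maxnP.
- have lt_k_alpha1 : (k < alpha.+1)%N by [].
  exact: (leq_bigmax_cond (F := fun k : 'I_alpha.+1 => k : nat) (Ordinal lt_k_alpha1)).
Qed.

Lemma val_alpha0 : v 0 = alpha.
Proof.
have [le_v_alpha _ v_max] := val_alpha_spec 0.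
by apply/eqP; rewrite eqn_leq le_v_alpha v_max ?rpred0.
Qed.

Lemma val_alpha_unit y : y != 0 ->
  (v y < alpha)%N /\ exists2 u, u \is a GRing.unit & y = pi ^+ v y * u.
Proof.
move=> y0; have [le_v_alpha /pidealP[u def_y] v_max] := val_alpha_spec y.
have lt_v_alpha : (v y < alpha)%N.
  rewrite ltn_neqAle le_v_alpha andbT; apply: contraNneq y0 => v_alpha.
  by rewrite def_y v_alpha pi_alpha mul0r.
split=> //; exists u => //; apply: contraTT (ltnSn (v y)).
rewrite -pideal1_nonunit -leqNgt => /pidealP[w def_u]; apply: v_max => //.
by apply/pidealP; exists w; rewrite {1}def_y def_u mulrA -exprSr.
Qed.

Lemma mulr_eq0_pideal y d : (d * y == 0) = (d \in pideal (alpha - v y)).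
Proof.
have [le_v_alpha /pidealP[w def_yw] _] := val_alpha_spec y.
apply/eqP/idP => [dy0|/pidealP[z ->]]; last first.
  by rewrite {2}def_yw mulrCA !mulrA -exprD subnKC // pi_alpha !mul0r.
have [->|y0] := eqVneq y 0; first by rewrite val_alpha0 subnn pideal0.
have [->|d0] := eqVneq d 0; first exact: rpred0.
have [_ [u u_unit def_y]] := val_alpha_unit y0.
have [_ [u' u'_unit def_d]] := val_alpha_unit d0.
have [_ dv _] := val_alpha_spec d; apply: pidealS dv.
rewrite leq_subLR addnC leqNgt; apply/negP => /expr_pi_neq0/negP; apply.
have uu'_unit : u' * u \is a GRing.unit by rewrite unitrM u'_unit.
rewrite exprD -(mulrK uu'_unit (_ * _)) mulrACA.
by rewrite -def_d -def_y dy0 mul0r.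
Qed.

Lemma pideal_gt0 k : (0 < #|pideal k|)%N.
Proof. by apply/card_gt0P; exists 0; exact: rpred0. Qed.

Definition mulpi_ker k : {pred R} := [pred z | pi ^+ k * z == 0].

Lemma card_pideal_mulpi m k : (m <= 1)%N -> (k < alpha)%N ->
  #|pideal m| = (#|pideal (k + m)| * #|mulpi_ker k|)%N.
Proof.
move=> le_m1 lt_k_alpha.
have ker_m z : z \in mulpi_ker k -> z \in pideal m.
  move=> /eqP pikz0; apply: (pidealS le_m1); rewrite pideal1_nonunit.
  apply: contraNN (expr_pi_neq0 lt_k_alpha) => z_unit.
  by rewrite -(mulrK z_unit (_ ^+ k)) pikz0 mul0r.
apply: (card_uniform_fibers (f := fun z => pi ^+ k * z)).
  by move=> _ /pidealP[z ->]; apply/pidealP; exists z; rewrite mulrA -exprD.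
move=> _ /pidealP[w ->]; rewrite -(card_translate (mulpi_ker k) (pi ^+ m * w)).
apply: eq_card => z; rewrite !in_set exprD -mulrA -subr_eq0 -mulrBr.
apply/andP/idP => [[_ //]|kerz]; split=> //.
rewrite -(subrK (pi ^+ m * w) z) rpredD ?(ker_m _ kerz) //.
by apply/pidealP; exists w.
Qed.

Lemma card_pideal1 : #|R| = (q * #|pideal 1|)%N.
Proof.
case: hR => _ _ _ <-; rewrite mulnC; congr (_ * _)%N.
by apply: eq_card => y; rewrite inE.
Qed.

Lemma card_pidealS k : (k < alpha)%N -> #|pideal k| = (q * #|pideal k.+1|)%N.
Proof.
move=> lt_k_alpha; have ker_gt0 : (0 < #|mulpi_ker k|)%N.
  by apply/card_gt0P; exists 0; rewrite inE mulr0.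
have := card_pideal_mulpi (leq0n 1) lt_k_alpha.
have := card_pideal_mulpi (leqnn 1) lt_k_alpha.
rewrite addn0 addn1 => card1 card0; apply/eqP.
rewrite -(eqn_pmul2r ker_gt0) -card0 -mulnA -card1 -card_pideal1.
by apply/eqP/eq_card => y; rewrite pideal0.
Qed.

Lemma q_gt1 : (1 < q)%N.
Proof.
have : (#|pideal 1| < #|R|)%N.
  rewrite -cardsT -[#|pideal 1|]cardsE; apply: proper_card; rewrite properT.
  by apply/negP => /eqP/setP/(_ 1); rewrite in_set pideal1_nonunit unitr1 inE.
by rewrite card_pideal1 -{1}(mul1n #|pideal 1|) ltn_pmul2r ?pideal_gt0.
Qed.

Definition eqmod k a b := a - b \in pideal k.

Lemma eqmod_refl k : reflexive (eqmod k).
Proof. by move=> a; rewrite /eqmod subrr rpred0. Qed.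

Lemma eqmod_sym k a b : eqmod k a b -> eqmod k b a.
Proof. by rewrite /eqmod -opprB rpredN. Qed.

Lemma eqmod_trans k b a c : eqmod k a b -> eqmod k b c -> eqmod k a c.
Proof. by rewrite /eqmod => ab bc; rewrite -(subrKA b) rpredD. Qed.

Lemma eqmodS m k a b : (m <= k)%N -> eqmod k a b -> eqmod m a b.
Proof. by move=> mk; apply: pidealS. Qed.

Lemma eqmod0 a b : eqmod 0 a b.
Proof. exact: pideal0. Qed.

Lemma eqmod_alpha a b : eqmod alpha a b -> a = b.
Proof. by rewrite /eqmod pideal_alpha subr_eq0 => /eqP. Qed.

Lemma eqmod1_unit a b : a \is a GRing.unit -> eqmod 1 a b -> b \is a GRing.unit.
Proof.
by move=> a_unit /eqmod_sym ab; rewrite -(subrK a b) addrC unitrDpideal1.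
Qed.

(* [R / pi ^+ k] is modelled inside [R] by the canonical representatives [rep k y];
   [reps k A] is then the image of [A] in [R / pi ^+ k]. *)
Definition rep k y := odflt y [pick z | eqmod k y z].

Lemma eqmod_rep k y : eqmod k y (rep k y).
Proof. by rewrite /rep; case: pickP => [//|_]; apply: eqmod_refl. Qed.

Lemma rep_eqmod k a b : eqmod k a b -> rep k a = rep k b.
Proof.
move=> ab; rewrite /rep (@eq_pick _ (eqmod k a) (eqmod k b)) => [|z].
  by case: pickP => // none_b; have := none_b b; rewrite eqmod_refl.
by apply/idP/idP; [apply: eqmod_trans (eqmod_sym ab) | apply: eqmod_trans ab].
Qed.

Lemma rep_alpha y : rep alpha y = y.
Proof. by apply/esym/eqmod_alpha/eqmod_rep. Qed.

Definition reps k (A : {pred R}) : {set R} := [set z in A | rep k z == z].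

Lemma reps_eqmod k A B a b :
  a \in reps k A -> b \in reps k B -> eqmod k a b -> a = b.
Proof.
rewrite !inE => /andP[_ /eqP rep_a] /andP[_ /eqP rep_b].
by move/rep_eqmod; rewrite rep_a rep_b.
Qed.

Lemma card_reps k (A : {pred R}) :
    (forall a b, eqmod k a b -> a \in A -> b \in A) ->
  #|A| = (#|reps k A| * #|pideal k|)%N.
Proof.
move=> A_closed; apply: (card_uniform_fibers (f := rep k)).
  move=> a a_A; rewrite inE (rep_eqmod (eqmod_sym (eqmod_rep k a))) eqxx andbT.
  exact: A_closed (eqmod_rep k a) a_A.
move=> c; rewrite inE => /andP[c_A /eqP rep_c].
rewrite -(card_translate (pideal k) c); apply: eq_card => z.
rewrite !in_set -/(eqmod k z c).
apply/andP/idP => [[_ /eqP rep_z]|zc]; first by rewrite -rep_z eqmod_rep.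
by rewrite (rep_eqmod zc) rep_c (A_closed c z) //; apply: eqmod_sym.
Qed.

Lemma card_residue_units : #|reps 1 GRing.unit| = (q - 1)%N.
Proof.
have card_units : #|GRing.unit : {pred R}| = ((q - 1) * #|pideal 1|)%N.
  rewrite mulnBl mul1n -card_pideal1 -(cardC (pideal 1)) addKn.
  by apply: eq_card => z; rewrite inE pideal1_nonunit negbK.
move: card_units; rewrite (@card_reps 1 GRing.unit).
  by move/eqP; rewrite eqn_pmul2r ?pideal_gt0 // => /eqP.
by move=> a b ab a_unit; apply: eqmod1_unit a_unit ab.
Qed.

Definition lifts j y := reps j.+1 [pred z | eqmod j z y].

Lemma card_lifts j y : (j < alpha)%N -> #|lifts j y| = q.
Proof.
move=> lt_j_alpha; apply/eqP; rewrite -(eqn_pmul2r (pideal_gt0 j.+1)) -card_reps.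
  rewrite -card_pidealS // -(card_translate (pideal j) y).
  by apply/eqP/eq_card => z; rewrite in_set.
by move=> a b /(eqmodS (leqnSn j)) ab; rewrite !inE; apply: eqmod_trans (eqmod_sym ab).
Qed.

Lemma mem_lifts j y z : (0 < j)%N -> y \in reps j GRing.unit ->
  (z \in lifts j y) = (z \in reps j.+1 GRing.unit) && (rep j z == y).
Proof.
rewrite !inE => j_gt0 /andP[y_unit /eqP rep_y]; rewrite andbAC; congr (_ && _).
apply/idP/andP => [zy | [_ /eqP <-]]; last exact: eqmod_rep.
split; first exact: eqmod1_unit y_unit (eqmodS j_gt0 (eqmod_sym zy)).
by rewrite (rep_eqmod zy) rep_y.
Qed.

End TruncatedDVR.

Lemma mulr_conj_eq (R : comUnitRingType) (a b y : R) : b \is a GRing.unit ->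
  (a * y * b^-1 == y) = ((a - b) * y == 0).
Proof.
move=> b_unit; rewrite mulrBl subr_eq0 -(can_eq (mulrK b_unit)) divrK //.
by rewrite [y * b]mulrC.
Qed.

Section QuiverRep.
Variables (I E : finType) (src tgt : E -> I).
Variables (R : finComUnitRingType) (pi : R) (alpha q : nat).
Hypothesis hR : is_Oalpha pi alpha q.
Variable x : {ffun E -> R}.

Local Notation adj k := (gamma_adj src tgt pi alpha q x k).
Local Notation eqmod := (eqmod pi).
Local Notation rep := (rep pi).
Local Notation reps := (reps pi).
Local Notation lifts := (lifts pi).

Definition edge_val e := val_alpha pi alpha (x e).

Lemma absv_gt_expr k e : (k <= alpha)%N ->
  ((q%:R : rat) ^- k < absv pi alpha q (x e)) = (edge_val e < k)%N.
Proof.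
move=> le_k_alpha; have q_gt0 : (0 : rat) < q%:R by rewrite ltr0n ltnW ?(q_gt1 hR).
rewrite /absv /edge_val; have [-> | xe0] := eqVneq (x e) 0.
  by rewrite val_alpha0 // ltNge ltW ?invr_gt0 ?exprn_gt0 // ltnNge le_k_alpha.
by rewrite ltf_pV2 ?posrE ?exprn_gt0 // ltr_eXn2l // ltr1n (q_gt1 hR).
Qed.

Lemma gamma_adj_sym k : connect_sym (adj k).
Proof. by apply: sym_connect_sym => i j; apply: eq_existsb => e; rewrite orbC. Qed.

Lemma gamma_adj_invariant k (T : eqType) (f : I -> T) : (k <= alpha)%N ->
  [forall i, forall j, adj k i j ==> (f i == f j)] =
  [forall e, (edge_val e < k)%N ==> (f (tgt e) == f (src e))].
Proof.
move=> le_k_alpha; apply/'forall_forallP/forallP => [f_adj e|f_edge i j].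
  apply/implyP => lt_e_k; rewrite eq_sym; apply: (implyP (f_adj _ _)).
  by apply/existsP; exists e; rewrite absv_gt_expr // lt_e_k !eqxx.
apply/implyP => /existsP[e /andP[]]; rewrite absv_gt_expr // => /(implyP (f_edge e)).
by move=> /eqP f_e /orP[] /andP[/eqP <- /eqP <-]; rewrite f_e.
Qed.

Lemma lt_edge_val_sub j e : (edge_val e < alpha - j)%N = (j < alpha - edge_val e)%N.
Proof. by rewrite ltn_subRL addnC -ltn_subRL. Qed.

Lemma eqmod_minn_reps m n (A B : {pred R}) a b :
    a \in reps m A -> b \in reps m B -> ((n < m)%N -> eqmod n a b) ->
  eqmod (minn m n) a b = (m <= n)%N ==> (a == b).
Proof.
move=> a_rep b_rep ab_n; case: leqP => [_ | /ab_n //].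
by apply/idP/eqP => [|->]; [apply: reps_eqmod a_rep b_rep | apply: eqmod_refl].
Qed.

(* [Sol j] is [Aut x] read modulo [pi ^+ j]: [g_t x_e = g_s x_e] iff [g_t = g_s] modulo
   the annihilator [pi ^+ (alpha - v(x_e))] of [x_e], and modulo [pi ^+ j] only the
   smaller of the two exponents is visible. *)
Definition Sol j := [set g : {ffun I -> R} | [forall i, g i \in reps j GRing.unit] &&
  [forall e, eqmod (minn j (alpha - edge_val e)) (g (tgt e)) (g (src e))]].

Lemma Sol_edge_eq j g e : g \in Sol j -> (j <= alpha - edge_val e)%N ->
  g (tgt e) = g (src e).
Proof.
rewrite inE => /andP[/forallP g_reps /forallP g_compat] le_j.
by apply: reps_eqmod (g_reps _) (g_reps _) _; rewrite -(minn_idPl le_j) g_compat.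
Qed.

Definition reduce j (g : {ffun I -> R}) := [ffun i => rep j (g i)].

Lemma reduce_Sol j g : (0 < j)%N -> g \in Sol j.+1 -> reduce j g \in Sol j.
Proof.
rewrite !inE => j_gt0 /andP[/forallP g_reps /forallP g_compat].
apply/andP; split.
  apply/forallP => i; rewrite ffunE; have := g_reps i; rewrite !inE => /andP[g_unit _].
  rewrite (rep_eqmod (eqmod_sym (eqmod_rep _ _ _))) eqxx andbT.
  exact: (eqmod1_unit hR g_unit (eqmodS j_gt0 (eqmod_rep pi j (g i)))).
apply/forallP => e; rewrite !ffunE.
have le_min : (minn j (alpha - edge_val e) <= minn j.+1 (alpha - edge_val e))%N.
  by rewrite leq_min geq_minr andbT (leq_trans (geq_minl _ _)).
apply: eqmod_trans (eqmodS (geq_minl _ _) (eqmod_rep _ _ (g (src e)))).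
apply: eqmod_trans (eqmodS le_min (g_compat e)).
exact: eqmodS (geq_minl _ _) (eqmod_sym (eqmod_rep _ _ _)).
Qed.

Lemma Sol_fiber j h : (0 < j)%N -> (j < alpha)%N -> h \in Sol j ->
  [set g in Sol j.+1 | reduce j g == h] =i
  [set g : {ffun I -> R} | [forall i, g i \in lifts j (h i)] &&
     [forall i, forall i', adj (alpha - j) i i' ==> (g i == g i')]].
Proof.
move=> j_gt0 lt_j_alpha h_Sol g.
have := h_Sol; rewrite !inE => /andP[/forallP h_reps /forallP h_compat].
rewrite gamma_adj_invariant ?leq_subr //.
have -> : (reduce j g == h) = [forall i, rep j (g i) == h i].
  apply/eqP/forallP => [<- i | reduce_g]; first by rewrite ffunE.
  by apply/ffunP => i; rewrite ffunE; apply/eqP.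
rewrite andbAC.
set g_ok := [forall i, g i \in reps j.+1 GRing.unit] && _.
have -> : [forall i, g i \in lifts j (h i)] = g_ok.
  apply/forallP/andP => [g_lifts | [/forallP g_reps /forallP g_red] i].
    by split; apply/forallP => i;
      have := g_lifts i; rewrite (mem_lifts hR) // => /andP[].
  by rewrite (mem_lifts hR) // g_reps g_red.
have compat_edge e : g_ok ->
    eqmod (minn j.+1 (alpha - edge_val e)) (g (tgt e)) (g (src e)) =
    (edge_val e < alpha - j)%N ==> (g (tgt e) == g (src e)).
  case/andP=> /forallP g_reps /forallP g_red; rewrite lt_edge_val_sub.
  apply: eqmod_minn_reps (g_reps _) (g_reps _) _; rewrite ltnS => le_j.
  have g_h i : eqmod (alpha - edge_val e) (g i) (h i).
    by apply: eqmodS le_j _; rewrite -(eqP (g_red i)) eqmod_rep.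
  apply: eqmod_trans (g_h _) _; apply: eqmod_trans (eqmod_sym (g_h _)).
  by have := h_compat e; rewrite (minn_idPr le_j).
apply/andP/andP => -[g_ok' /forallP g_e]; split=> //; apply/forallP => e.
  by rewrite -compat_edge.
by rewrite compat_edge.
Qed.

Lemma card_Sol1 : #|Sol 1| = ((q - 1) ^ n_comp (adj alpha) predT)%N.
Proof.
rewrite -(card_residue_units hR).
rewrite -(card_edge_invariant (gamma_adj_sym alpha) (C := fun=> reps 1 GRing.unit)) //.
apply: eq_card => g; rewrite !inE gamma_adj_invariant //.
apply/andb_id2l => /forallP g_reps; apply: eq_forallb => e.
rewrite -[alpha in (_ < alpha)%N]subn0 lt_edge_val_sub.
apply: eqmod_minn_reps (g_reps _) (g_reps _) _.
by rewrite ltnS leqn0 => /eqP ->; apply: eqmod0.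
Qed.

Lemma card_Sol_step j : (0 < j)%N -> (j < alpha)%N ->
  #|Sol j.+1| = (#|Sol j| * q ^ n_comp (adj (alpha - j)) predT)%N.
Proof.
move=> j_gt0 lt_j_alpha; apply: (card_uniform_fibers (f := reduce j)) => [g|h h_Sol].
  exact: reduce_Sol.
have h_const : [forall i, forall i', adj (alpha - j) i i' ==> (h i == h i')].
  rewrite gamma_adj_invariant ?leq_subr //; apply/forallP => e; apply/implyP.
  by rewrite lt_edge_val_sub => lt_j; rewrite (Sol_edge_eq h_Sol (ltnW lt_j)).
rewrite (eq_card (Sol_fiber j_gt0 lt_j_alpha h_Sol)).
apply: (card_edge_invariant (gamma_adj_sym _) (C := fun i => lifts j (h i))).
  move=> i i' adj_ii'.
  by move/'forall_forallP/(_ i i')/implyP/(_ adj_ii')/eqP: h_const => ->.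
by move=> i; apply: (card_lifts hR).
Qed.

Lemma card_Sol j : (0 < j)%N -> (j <= alpha)%N ->
  #|Sol j| = ((q - 1) ^ n_comp (adj alpha) predT *
              q ^ (\sum_((alpha - j).+1 <= k < alpha) n_comp (adj k) predT))%N.
Proof.
elim: j => // -[_ _ alpha_gt0 | j IH _ lt_j_alpha].
  by rewrite card_Sol1 big_geq ?muln1 // subn1 prednK.
have lt_sub : (alpha - j.+1 < alpha)%N.
  by rewrite ltn_subrL (leq_ltn_trans _ lt_j_alpha).
rewrite card_Sol_step // IH // ?(ltnW lt_j_alpha) // -mulnA -expnD.
by rewrite [in RHS]subnSK // (big_ltn lt_sub) addnC.
Qed.

Lemma card_Aut : #|Aut_x src tgt x| = #|Sol alpha|.
Proof.
have val_inj_ffun : injective (fun g : {ffun I -> {unit R}} => [ffun i => val (g i)]).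
  move=> g1 g2 /ffunP g12; apply/ffunP => i; apply: val_inj.
  by have := g12 i; rewrite !ffunE.
rewrite -(card_imset _ val_inj_ffun); apply: eq_card => g.
have edge_eq e (a b : R) : b \is a GRing.unit ->
    (a * x e * b^-1 == x e) = eqmod (minn alpha (alpha - edge_val e)) a b.
  move=> b_unit; rewrite mulr_conj_eq // (mulr_eq0_pideal hR).
  by rewrite (minn_idPr (leq_subr _ _)).
have reps_alpha : reps alpha GRing.unit =i GRing.unit.
  by move=> z; rewrite inE (rep_alpha hR) eqxx andbT.
apply/imsetP/idP => [[u] | ].
  rewrite inE => /forallP u_aut ->; rewrite inE; apply/andP; split.
    by apply/forallP => i; rewrite ffunE reps_alpha; apply: valP.
  by apply/forallP => e; rewrite !ffunE -edge_eq ?u_aut //; apply: valP.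
rewrite inE => /andP[/forallP g_reps /forallP g_compat].
have g_unit i : g i \is a GRing.unit by rewrite -reps_alpha.
exists [ffun i => Sub (g i) (g_unit i) : {unit R}].
  by rewrite inE; apply/forallP => e; rewrite !ffunE /= edge_eq // g_compat.
by apply/ffunP => i; rewrite !ffunE.
Qed.

End QuiverRep.

Theorem mainTheorem16 (I E : finType) (src tgt : E -> I)
    (R : finComUnitRingType) (pi : R) (alpha q : nat)
    (halpha : (1 <= alpha)%N) (hR : is_Oalpha pi alpha q)
    (x : {ffun E -> R}) :
  #|Aut_x src tgt x| =
    ((q - 1) ^ (n_comp_gamma src tgt pi alpha q x alpha) *
     q ^ (\sum_(1 <= k < alpha) n_comp_gamma src tgt pi alpha q x k))%N.
Proof.
by rewrite (card_Aut src tgt hR) (card_Sol src tgt hR x halpha) // subnn.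
Qed.
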